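(* Let $X,Y$ be polynomial orbit-finite sets and $R\subseteq X\times Y$ a finitely supported binary relation such that for every $x\in X$ the set $\{y: (x,y)\in R\}$ is nonempty. Then there is a finitely supported function $f:X\to Y$ such that $(x,f(x))\in R$ for all $x\in X$.
   Context: Atoms $\mathbb A$ are a countably infinite set; atom automorphisms are bijections of $\mathbb A$. Polynomial orbit-finite sets are built from $\mathbb A$ and singletons by finite products and disjoint unions with the natural action; automorphisms act on subsets elementwise and on functions by $\pi(f)=\pi\circ f\circ\pi^{-1}$. An object is finitely supported if there is a finite tuple $\bar a$ of atoms such that every automorphism fixing $\bar a$ pointwise fixes the object. *)

From Stdlib Require Import List.

Definition atom := nat.

Definition is_autom (pi pinv : atom -> atom) : Prop :=
  (forall a, pinv (pi a) = a) /\ (forall a, pi (pinv a) = a).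

(* Syntax of polynomial orbit-finite sets: built from A and singletons
   by finite products and disjoint unions. *)
Inductive pof : Type :=
  | PAtom : pof
  | PUnit : pof
  | PProd : pof -> pof -> pof
  | PSum  : pof -> pof -> pof.

Fixpoint el (p : pof) : Type :=
  match p with
  | PAtom => atom
  | PUnit => unit
  | PProd p q => (el p * el q)%type
  | PSum p q => (el p + el q)%type
  end.

Fixpoint act (pi : atom -> atom) (p : pof) : el p -> el p :=
  match p return el p -> el p with
  | PAtom => fun a => pi a
  | PUnit => fun u => u
  | PProd p q => fun z => (act pi p (fst z), act pi q (snd z))
  | PSum p q => fun z => match z with
                         | inl x => inl (act pi p x)
                         | inr y => inr (act pi q y)
                         end
  end.

Definition fixes_all (pi : atom -> atom) (s : list atom) : Prop :=
  forall a, In a s -> pi a = a.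

(* Subsets of X (as predicates); action pi(S) = { pi z | z in S }. *)
Definition set_fixed (p : pof) (pi : atom -> atom) (S : el p -> Prop) : Prop :=
  forall w, S w <-> exists z, S z /\ act pi p z = w.

Definition fs_set (p : pof) (S : el p -> Prop) : Prop :=
  exists s : list atom, forall pi pinv, is_autom pi pinv ->
    fixes_all pi s -> set_fixed p pi S.

(* Functions; action pi(f) = pi o f o pi^{-1}. *)
Definition fs_fun (p q : pof) (f : el p -> el q) : Prop :=
  exists s : list atom, forall pi pinv, is_autom pi pinv ->
    fixes_all pi s -> forall x, act pi q (f (act pinv p x)) = f x.

From Stdlib Require Import List Arith Lia Classical ClassicalEpsilon
  FunctionalExtensionality PropExtensionality.
Import ListNotations.

(* Let s support R.  Choose a list E of fresh atoms, more than
   the number of atom slots of X and Y, and put S := s ++ E.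
   1. Small witnesses: for every x there is a witness y with R (x, y) whose
      atoms lie in atoms(x) ++ S.  An atom of a witness outside that list can
      be swapped with an unused atom of E; the swap fixes s and x, so the
      result is again a witness, with fewer bad atoms.
   2. Equivariant uniformization: pick a representative in every orbit of X
      under the automorphisms fixing S, choose a small witness there, and
      transport it along the orbit.  Smallness makes the transport
      independent of the chosen automorphism, so the resulting function is
      equivariant for automorphisms fixing S, i.e. it is supported by S. *)

(* The atoms occurring in an element, i.e. its least support. *)
Fixpoint atoms (p : pof) : el p -> list atom :=
  match p return el p -> list atom with
  | PAtom => fun a => [a]
  | PUnit => fun _ => []
  | PProd p q => fun z => atoms p (fst z) ++ atoms q (snd z)
  | PSum p q => fun z => match z with inl x => atoms p x | inr y => atoms q y end
  end.

Fixpoint psize (p : pof) : nat :=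
  match p with
  | PAtom => 1
  | PUnit => 0
  | PProd p q | PSum p q => psize p + psize q
  end.

Lemma atoms_length p (z : el p) : length (atoms p z) <= psize p.
Proof.
  induction p; simpl in *; try lia.
  - destruct z as [u v]; simpl; rewrite length_app.
    specialize (IHp1 u); specialize (IHp2 v); lia.
  - destruct z as [u|v]; [specialize (IHp1 u)|specialize (IHp2 v)]; lia.
Qed.

Lemma act_id p (z : el p) : act (fun a => a) p z = z.
Proof.
  induction p; simpl; auto.
  - destruct z; simpl; rewrite IHp1, IHp2; auto.
  - destruct z; simpl; [rewrite IHp1|rewrite IHp2]; auto.
Qed.

Lemma act_comp f g p (z : el p) :
  act f p (act g p z) = act (fun a => f (g a)) p z.
Proof.
  induction p; simpl; auto.
  - destruct z; simpl; rewrite IHp1, IHp2; auto.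
  - destruct z; simpl; [rewrite IHp1|rewrite IHp2]; auto.
Qed.

Lemma act_ext_on f g p (z : el p) :
  (forall a, In a (atoms p z) -> f a = g a) -> act f p z = act g p z.
Proof.
  induction p; simpl; intros H; auto.
  - destruct z; simpl in *.
    rewrite IHp1, IHp2; auto; intros; apply H; apply in_or_app; auto.
  - destruct z; simpl; [rewrite IHp1|rewrite IHp2]; auto.
Qed.

Lemma act_eq_atoms f g p (z : el p) :
  act f p z = act g p z -> forall a, In a (atoms p z) -> f a = g a.
Proof.
  induction p; simpl; intros H a Ha.
  - destruct Ha as [<-|[]]; auto.
  - destruct Ha.
  - destruct z; simpl in *; injection H; intros.
    apply in_app_or in Ha; destruct Ha; eauto.
  - destruct z; simpl in *; injection H; intros; eauto.
Qed.

Lemma atoms_act f p (z : el p) : atoms p (act f p z) = map f (atoms p z).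
Proof.
  induction p; simpl; auto.
  - destruct z; simpl; rewrite IHp1, IHp2, map_app; auto.
  - destruct z; simpl; auto.
Qed.

Lemma autom_id : is_autom (fun a => a) (fun a => a).
Proof. split; auto. Qed.

Lemma autom_comp pi pinv sg sginv : is_autom pi pinv -> is_autom sg sginv ->
  is_autom (fun a => pi (sg a)) (fun a => sginv (pinv a)).
Proof. intros [H1 H2] [H3 H4]; split; intros a; [rewrite H1|rewrite H4]; auto. Qed.

Lemma autom_inv pi pinv : is_autom pi pinv -> is_autom pinv pi.
Proof. intros [H1 H2]; split; auto. Qed.

Lemma fixes_inv pi pinv S :
  is_autom pi pinv -> fixes_all pi S -> fixes_all pinv S.
Proof. intros [H1 _] H a Ha. rewrite <- (H a Ha) at 1. auto. Qed.

Lemma fixes_comp pi sg S :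
  fixes_all pi S -> fixes_all sg S -> fixes_all (fun a => pi (sg a)) S.
Proof. intros H1 H2 a Ha. rewrite H2, H1; auto. Qed.

Lemma fixes_incl pi s S : incl s S -> fixes_all pi S -> fixes_all pi s.
Proof. intros Hi H a Ha. auto. Qed.

Lemma act_inv_cancel pi pinv p (z : el p) :
  is_autom pi pinv -> act pi p (act pinv p z) = z.
Proof.
  intros [_ H]. rewrite act_comp. rewrite <- (act_id p z) at 2.
  apply act_ext_on; auto.
Qed.

Definition swap (f e : atom) (a : atom) : atom :=
  if Nat.eqb a f then e else if Nat.eqb a e then f else a.

Lemma swap_autom f e : is_autom (swap f e) (swap f e).
Proof.
  unfold swap; split; intros a;
  (destruct (Nat.eqb_spec a f); [|destruct (Nat.eqb_spec a e)]);
  repeat (match goal with |- context [Nat.eqb ?x ?y] =>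
            destruct (Nat.eqb_spec x y) end); lia.
Qed.

Lemma swap_other f e a : a <> f -> a <> e -> swap f e a = a.
Proof.
  intros Hf He; unfold swap.
  destruct (Nat.eqb_spec a f), (Nat.eqb_spec a e); congruence.
Qed.

Lemma filter_swap_le (b : atom -> bool) f e l :
  ~ In e l -> b e = false ->
  length (filter b (map (swap f e) l)) <= length (filter b l).
Proof.
  induction l as [|a l IH]; simpl; intros Hn Hb; auto.
  specialize (IH (fun h => Hn (or_intror h)) Hb).
  unfold swap at 1. destruct (Nat.eqb_spec a f).
  - subst. rewrite Hb. destruct (b f); simpl; lia.
  - destruct (Nat.eqb_spec a e); [exfalso; auto|].
    destruct (b a); simpl; lia.
Qed.

Lemma filter_swap_lt (b : atom -> bool) f e l :
  ~ In e l -> b e = false -> In f l -> b f = true ->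
  length (filter b (map (swap f e) l)) < length (filter b l).
Proof.
  induction l as [|a l IH]; simpl; intros Hn Hb Hf Hbf; [destruct Hf|].
  unfold swap at 1. destruct (Nat.eqb_spec a f).
  - subst. rewrite Hb, Hbf. simpl.
    pose proof (filter_swap_le b f e l (fun h => Hn (or_intror h)) Hb). lia.
  - destruct (Nat.eqb_spec a e); [exfalso; auto|].
    destruct Hf as [->|Hf]; [congruence|].
    specialize (IH (fun h => Hn (or_intror h)) Hb Hf Hbf).
    destruct (b a); simpl; lia.
Qed.

Lemma pigeonhole (E L : list atom) f :
  NoDup E -> ~ In f E -> In f L -> length L < length E ->
  exists e, In e E /\ ~ In e L.
Proof.
  intros HE Hf HL Hlen.
  destruct (classic (exists e, In e E /\ ~ In e L)) as [H|H]; auto. exfalso.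
  assert (Hi : incl (f :: E) L).
  { intros a [<-|Ha]; auto. destruct (in_dec Nat.eq_dec a L); auto.
    exfalso; apply H; eauto. }
  apply NoDup_incl_length in Hi; [simpl in Hi; lia|constructor; auto].
Qed.

Lemma fresh_atoms (s : list atom) n :
  exists E, NoDup E /\ length E = n /\ forall e, In e E -> ~ In e s.
Proof.
  assert (Hbound : forall a, In a s -> a <= list_sum s).
  { induction s as [|b s IH]; simpl; intros a []; subst; try lia.
    specialize (IH a H); lia. }
  exists (seq (S (list_sum s)) n). split; [apply seq_NoDup|split].
  - apply length_seq.
  - intros e He Hes. apply in_seq in He. apply Hbound in Hes. lia.
Qed.

Definition invariant (X Y : pof) (S : list atom) (P : el X -> el Y -> Prop) :=
  forall pi pinv, is_autom pi pinv -> fixes_all pi S ->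
    forall x y, P x y -> P (act pi X x) (act pi Y y).

Definition equivariant (X Y : pof) (S : list atom) (f : el X -> el Y) :=
  forall pi pinv, is_autom pi pinv -> fixes_all pi S ->
    forall x, f (act pi X x) = act pi Y (f x).

Lemma fs_set_invariant X Y s (R : el (PProd X Y) -> Prop) :
  (forall pi pinv, is_autom pi pinv -> fixes_all pi s ->
     set_fixed (PProd X Y) pi R) ->
  invariant X Y s (fun x y => R (x, y)).
Proof.
  intros Hs pi pinv Ha Hf x y Rxy.
  apply (Hs _ _ Ha Hf). exists (x, y); auto.
Qed.

Lemma equivariant_fs_fun X Y S f : equivariant X Y S f -> fs_fun X Y f.
Proof.
  intros Heqv. exists S. intros pi pinv Ha Hf x.
  rewrite (Heqv _ _ (autom_inv _ _ Ha) (fixes_inv _ _ _ Ha Hf)).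
  apply act_inv_cancel; auto.
Qed.

Section SmallWitness.

Variables (X Y : pof) (s S E : list atom) (P : el X -> el Y -> Prop).
Hypothesis P_invariant : invariant X Y s P.
Hypothesis s_in_S : incl s S.
Hypothesis E_in_S : incl E S.
Hypothesis E_nodup : NoDup E.
Hypothesis E_fresh : forall e, In e E -> ~ In e s.
Hypothesis E_large : psize X + psize Y < length E.

Definition bad (x : el X) (a : atom) : bool :=
  if in_dec Nat.eq_dec a (atoms X x ++ S) then false else true.

Definition bad_count (x : el X) (y : el Y) : nat :=
  length (filter (bad x) (atoms Y y)).

(* A witness with a bad atom f can be improved by swapping f with an atom of
   E occurring neither in x nor in y; the swap fixes s and x. *)
Lemma swap_out_bad_atom x y f :
  P x y -> In f (atoms Y y) -> bad x f = true ->
  exists y', P x y' /\ bad_count x y' < bad_count x y.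
Proof.
  intros Pxy Hfy Hbad.
  assert (Hfout : ~ In f (atoms X x ++ S)).
  { unfold bad in Hbad; destruct (in_dec _ _ _); [discriminate|auto]. }
  assert (HfE : ~ In f E) by (intro h; apply Hfout, in_or_app; auto).
  destruct (pigeonhole E (atoms X x ++ atoms Y y) f E_nodup HfE)
    as [e [HeE HeL]].
  { apply in_or_app; auto. }
  { rewrite length_app.
    pose proof (atoms_length X x); pose proof (atoms_length Y y); lia. }
  assert (Hfix : fixes_all (swap f e) s).
  { intros a Ha. apply swap_other; intros ->.
    - apply Hfout, in_or_app; auto.
    - apply (E_fresh e); auto. }
  assert (Hx : act (swap f e) X x = x).
  { rewrite <- (act_id X x) at 2. apply act_ext_on. intros a Ha.
    apply swap_other; intros ->.
    - apply Hfout, in_or_app; auto.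
    - apply HeL, in_or_app; auto. }
  exists (act (swap f e) Y y). split.
  - rewrite <- Hx at 1. apply (P_invariant _ _ (swap_autom f e) Hfix); auto.
  - unfold bad_count. rewrite atoms_act. apply filter_swap_lt; auto.
    + intro h; apply HeL, in_or_app; auto.
    + unfold bad. destruct (in_dec _ _ _) as [|n]; auto.
      exfalso; apply n, in_or_app; auto.
Qed.

Lemma small_witness x y :
  P x y -> exists y', P x y' /\ incl (atoms Y y') (atoms X x ++ S).
Proof.
  remember (bad_count x y) as m eqn:Hm. revert y Hm.
  induction m as [m IH] using lt_wf_ind. intros y Hm Pxy.
  destruct (classic (exists f, In f (atoms Y y) /\ bad x f = true))
    as [[f [Hfy Hbad]]|Hgood].
  - destruct (swap_out_bad_atom x y f Pxy Hfy Hbad) as [y' [Pxy' Hlt]].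
    apply (IH (bad_count x y')) with (y := y'); subst; auto.
  - exists y. split; auto. intros a Ha.
    destruct (in_dec Nat.eq_dec a (atoms X x ++ S)) as [|Hout]; auto.
    exfalso; apply Hgood; exists a; split; auto.
    unfold bad; destruct (in_dec _ _ _); tauto.
Qed.

End SmallWitness.

Section Uniformization.

Variables (X Y : pof) (S : list atom).

Definition same_orbit (x z : el X) : Prop :=
  exists pi pinv, is_autom pi pinv /\ fixes_all pi S /\ act pi X z = x.

Lemma same_orbit_act pi pinv x z :
  is_autom pi pinv -> fixes_all pi S ->
  same_orbit (act pi X x) z <-> same_orbit x z.
Proof.
  intros Ha Hf. split; intros (sg & sginv & Hsa & Hsf & Hsz).
  - exists (fun a => pinv (sg a)), (fun a => sginv (pi a)).
    split; [apply autom_comp; auto; apply autom_inv; auto|].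
    split; [apply fixes_comp; auto; eapply fixes_inv; eauto|].
    rewrite <- act_comp, Hsz, act_comp. rewrite <- (act_id X x) at 2.
    apply act_ext_on. intros a _. apply (proj1 Ha).
  - exists (fun a => pi (sg a)), (fun a => sginv (pinv a)).
    split; [apply autom_comp; auto|].
    split; [apply fixes_comp; auto|].
    rewrite <- act_comp, Hsz; auto.
Qed.

Lemma orbit_transversal :
  exists (rep : el X -> el X) (pic : el X -> atom -> atom),
    (forall pi pinv x, is_autom pi pinv -> fixes_all pi S ->
       rep (act pi X x) = rep x) /\
    (forall x, (exists pinv, is_autom (pic x) pinv) /\
       fixes_all (pic x) S /\ act (pic x) X (rep x) = x).
Proof.
  exists (fun x => epsilon (inhabits x) (same_orbit x)).
  assert (Hrep : forall x, same_orbit x (epsilon (inhabits x) (same_orbit x))).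
  { intros x. apply epsilon_spec.
    exists x, (fun a => a), (fun a => a). split; [apply autom_id|].
    split; [intros a _; auto|apply act_id]. }
  exists (fun x => proj1_sig (constructive_indefinite_description _ (Hrep x))).
  split.
  - intros pi pinv x Ha Hf.
    assert (Horb : same_orbit (act pi X x) = same_orbit x).
    { extensionality z. apply propositional_extensionality.
      apply (same_orbit_act pi pinv); auto. }
    (* the inhabitation witnesses differ, but epsilon ignores them *)
    rewrite Horb. f_equal. apply proof_irrelevance.
  - intros x.
    destruct (proj2_sig (constructive_indefinite_description _ (Hrep x)))
      as (pinv & Ha & Hf & He).
    split; [exists pinv; auto|auto].
Qed.

(* An invariant relation with small witnesses everywhere has an equivariant
   choice function: transport the witness at the orbit representative. *)
Lemma equivariant_uniformization (P : el X -> el Y -> Prop) (g : el X -> el Y) :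
  invariant X Y S P ->
  (forall x, P x (g x)) ->
  (forall x, incl (atoms Y (g x)) (atoms X x ++ S)) ->
  exists f, equivariant X Y S f /\ forall x, P x (f x).
Proof.
  intros HP Hg Hsmall.
  destruct orbit_transversal as (rep & pic & Hrep & Hpic).
  exists (fun x => act (pic x) Y (g (rep x))). split.
  - intros pi pinv Ha Hf x.
    rewrite (Hrep _ _ _ Ha Hf), act_comp.
    destruct (Hpic (act pi X x)) as (_ & Hf1 & He1).
    destruct (Hpic x) as (_ & Hf2 & He2).
    rewrite (Hrep _ _ _ Ha Hf) in He1.
    apply act_ext_on. intros a Ha'.
    apply Hsmall, in_app_or in Ha'. destruct Ha' as [Hx|HS].
    + apply (act_eq_atoms (pic (act pi X x)) (fun a => pi (pic x a)) X (rep x));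
        auto.
      rewrite He1, <- (act_comp pi (pic x)), He2; auto.
    + rewrite Hf1, Hf2, Hf; auto.
  - intros x. destruct (Hpic x) as ([pinv Ha] & Hf & He).
    rewrite <- He at 1. apply (HP _ _ Ha Hf); auto.
Qed.

End Uniformization.

Theorem mainTheorem9 (X Y : pof) (R : el (PProd X Y) -> Prop) :
  fs_set (PProd X Y) R ->
  (forall x : el X, exists y : el Y, R (x, y)) ->
  exists f : el X -> el Y, fs_fun X Y f /\ forall x : el X, R (x, f x).
Proof.
  intros [s Hs] Htot.
  set (P := fun x y => R (x, y)).
  destruct (fresh_atoms s (S (psize X + psize Y)))
    as (E & HE & Hlen & Hfresh).
  set (S := s ++ E).
  assert (HsS : incl s S) by (intros a h; apply in_or_app; auto).
  assert (HES : incl E S) by (intros a h; apply in_or_app; auto).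
  assert (HPs : invariant X Y s P) by (apply fs_set_invariant; auto).
  assert (HPS : invariant X Y S P).
  { intros pi pinv Ha Hf. apply (HPs _ _ Ha), (fixes_incl _ _ _ HsS Hf). }
  assert (Hsmall : forall x, exists y, P x y /\ incl (atoms Y y) (atoms X x ++ S)).
  { intros x. destruct (Htot x) as [y Hy].
    apply (small_witness X Y s S E P) with (y := y); auto; lia. }
  destruct (choice _ Hsmall) as [g Hg].
  destruct (equivariant_uniformization X Y S P g HPS
              (fun x => proj1 (Hg x)) (fun x => proj2 (Hg x))) as [f [Hf HPf]].
  exists f. split; [apply (equivariant_fs_fun X Y S f Hf)|exact HPf].
Qed.
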